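(* There exists an aperiodic probability $F\in\mathbb{P}(\mathbb{Z}^+)$ with $\sum_{k\ge0}kF(k)=+\infty$ and $\lim_{\xi\to0}|\mathrm{Arg}(1-\widehat{F}(\xi))|=\pi/2$. Consequently there is no $\theta\in(0,\pi/2)$ such that $\phi_F(w)\in\mathbb{D}\cup\{1\}$ and $1-\phi_F(w)\in\overline{\Lambda}_\theta$ for all $w\in\overline{\mathbb{D}}$, and $F\notin\mathcal{A}$.
   Context: $\mathbb{P}(\mathbb{Z}^+)$ is the set of functions $F:\mathbb{Z}\to[0,1]$ with $\sum F=1$ and $F(k)=0$ for $k<0$. $F$ is adapted if $\mathrm{supp}(F)$ generates the group $\mathbb{Z}$, aperiodic if every translate $\delta_m*F$ ($m\in\mathbb{Z}$) is adapted. $\widehat{F}(\xi)=\sum_kF(k)e^{-ik\xi}$, $\phi_F(w)=\sum_{k\ge0}F(k)w^k$ for $w\in\overline{\mathbb{D}}=\{|w|\le1\}$, $\mathbb{D}=\{|w|<1\}$, $\mathrm{Arg}$ is the principal argument, $\overline{\Lambda}_\theta=\{0\}\cup\{z:|\mathrm{Arg}\,z|\le\theta\}$. $\mathcal{A}=\{F\in\mathbb{P}(\mathbb{Z}^+):\sup_{n\in\mathbb{N}}n\sum_k|F^{(n)}(k)-F^{(n+1)}(k)|<\infty\}$, $F^{(n)}$ the $n$-th convolution power. *)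

From Stdlib Require Import Reals ZArith List.
From Coquelicot Require Import Coquelicot.
Open Scope R_scope.

(* F ∈ P(Z^+): values in [0,1], vanishing on negative integers, total mass 1.
   Since F vanishes on negative integers, sum over Z = sum over k >= 0. *)
Definition in_PZplus (F : Z -> R) : Prop :=
  (forall k, 0 <= F k <= 1) /\
  (forall k, (k < 0)%Z -> F k = 0) /\
  is_series (fun n : nat => F (Z.of_nat n)) 1.

Definition supp (F : Z -> R) (k : Z) : Prop := F k <> 0.

Definition generates_Z (S : Z -> Prop) : Prop :=
  forall n : Z, exists l : list (Z * Z),
    List.Forall (fun p => S (fst p)) l /\
    n = fold_right (fun p acc => (snd p * fst p + acc)%Z) 0%Z l.

Definition adapted (F : Z -> R) : Prop := generates_Z (supp F).

(* delta_m * F is the translate k |-> F (k - m). *)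
Definition translate (m : Z) (F : Z -> R) : Z -> R := fun k => F (k - m)%Z.

Definition aperiodic (F : Z -> R) : Prop :=
  forall m : Z, adapted (translate m F).

(* Fourier transform  F^(xi) = sum_k F(k) e^{-i k xi}  (F supported on Z^+). *)
Definition Fhat (F : Z -> R) (xi : R) : C :=
  (Series (fun k : nat => F (Z.of_nat k) * cos (INR k * xi)),
   - Series (fun k : nat => F (Z.of_nat k) * sin (INR k * xi))).

Definition phiF (F : Z -> R) (w : C) : C :=
  (Series (fun k : nat => F (Z.of_nat k) * Re (Cpow w k)),
   Series (fun k : nat => F (Z.of_nat k) * Im (Cpow w k))).

(* Principal argument, with values in (-PI, PI]; Arg 0 := 0. *)
Definition Arg (z : C) : R :=
  let x := Re z in let y := Im z in
  match Rlt_dec 0 x with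
  | left _ => atan (y / x)
  | right _ =>
    match Rlt_dec x 0 with
    | left _ => match Rle_dec 0 y with
                | left _ => atan (y / x) + PI
                | right _ => atan (y / x) - PI
                end
    | right _ => match Rlt_dec 0 y with
                 | left _ => PI / 2
                 | right _ => match Rlt_dec y 0 with
                              | left _ => - (PI / 2)
                              | right _ => 0
                              end
                 end
    end
  end.

Definition Lambda_bar (theta : R) (z : C) : Prop :=
  z = 0%C \/ Rabs (Arg z) <= theta.

(* Convolution powers F^(n) for F supported on Z^+ (then F^(n) is supported on
   Z^+ and the convolution sum over Z reduces to a finite sum). *)
Fixpoint convpow (F : Z -> R) (n : nat) : Z -> R :=
  match n with
  | O => fun k => if Z.eqb k 0 then 1 else 0
  | S m => fun k =>
      match k with
      | Z.neg _ => 0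
      | _ => sum_f_R0 (fun j : nat => F (Z.of_nat j) * convpow F m (k - Z.of_nat j)%Z)
                      (Z.to_nat k)
      end
  end.

(* The class A: sup_n n * sum_k |F^(n)(k) - F^(n+1)(k)| < +oo.
   (F^(n), F^(n+1) vanish on negative k; the series of nonnegative terms is
   bounded iff all its partial sums are.) *)
Definition in_A (F : Z -> R) : Prop :=
  in_PZplus F /\
  exists M : R, forall (n N : nat),
    INR n * sum_f_R0 (fun k : nat =>
        Rabs (convpow F n (Z.of_nat k) - convpow F (S n) (Z.of_nat k))) N <= M.

From Stdlib Require Import Reals ZArith List Lra Lia.
From Coquelicot Require Import Coquelicot.
Open Scope R_scope.

(* The example is F(k) = 1/(k(k+1)) = 1/k - 1/(k+1) for k >= 1, whose mean is the harmonic
   series.  Write 1 - Fhat(xi) = R(xi) + i S(xi).  Splitting the series at M ~ 1/xi gives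
   R(xi) <= 3 xi, while sin(k xi) >= 5/6 k xi on the head gives S(xi) >~ xi log(1/xi); hence
   S/R -> +oo and |Arg (1 - Fhat)| -> pi/2.  On the unit circle phi_F coincides with Fhat, which
   rules out every sector Lambda_theta with theta < pi/2.  Finally the Fourier transform of
   F^(n) is Fhat^n, so F in A would bound n |z^n (1 - z)| for z = Fhat(xi); choosing
   n ~ 1/(2 R(xi)) makes |z|^n >= 1/2 and n |1 - z| >= n S(xi) >~ S/R, which is unbounded. *)

Definition Ftel (k : Z) : R := if Z.ltb 0 k then / (IZR k * (IZR k + 1)) else 0.

Definition ftel (n : nat) : R := Ftel (Z.of_nat n).

Lemma ftel_0 : ftel 0 = 0.
Proof. reflexivity. Qed.

Lemma ftel_S n : ftel (S n) = / (INR (S n) * (INR (S n) + 1)).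
Proof.
  unfold ftel, Ftel.
  replace (Z.ltb 0 (Z.of_nat (S n))) with true by (symmetry; apply Z.ltb_lt; lia).
  now rewrite <- INR_IZR_INZ.
Qed.

Lemma ftel_nonneg n : 0 <= ftel n.
Proof.
  destruct n as [|n]; [rewrite ftel_0; lra|].
  rewrite ftel_S, S_INR. pose proof (pos_INR n).
  apply Rlt_le, Rinv_0_lt_compat. nra.
Qed.

Lemma sum_ftel n : sum_f_R0 ftel n = 1 - / (INR n + 1).
Proof.
  induction n as [|n IHn]; [simpl; rewrite ftel_0; lra|].
  rewrite tech5, IHn, ftel_S, S_INR. pose proof (pos_INR n). field. lra.
Qed.

Lemma is_series_ftel : is_series ftel 1.
Proof.
  apply is_series_Reals. intros eps Heps.
  destruct (INR_unbounded (/ eps)) as [N HN]. exists N. intros n Hn.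
  unfold Rdist. rewrite sum_ftel.
  assert (HNn : INR N <= INR n) by (apply le_INR; lia).
  pose proof (pos_INR N).
  replace (1 - / (INR n + 1) - 1) with (- / (INR n + 1)) by ring.
  rewrite Rabs_Ropp, Rabs_pos_eq by (apply Rlt_le, Rinv_0_lt_compat; lra).
  rewrite <- (Rinv_inv eps). apply Rinv_lt_contravar; [|lra].
  apply Rmult_lt_0_compat; [apply Rinv_0_lt_compat|]; lra.
Qed.

Lemma in_PZplus_Ftel : in_PZplus Ftel.
Proof.
  split; [|split].
  - intro k. unfold Ftel. destruct (Z.ltb_spec 0 k); [|lra].
    assert (1 <= IZR k) by (apply IZR_le; lia).
    split; [apply Rlt_le, Rinv_0_lt_compat; nra|].
    rewrite <- Rinv_1. apply Rinv_le_contravar; nra.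
  - intros k Hk. unfold Ftel. destruct (Z.ltb_spec 0 k); [lia|reflexivity].
  - exact is_series_ftel.
Qed.

(* Every translate of [Ftel] charges [m + 1] and [m + 2], and [n = n (m + 2) - n (m + 1)]. *)
Lemma aperiodic_Ftel : aperiodic Ftel.
Proof.
  intros m n. exists ((m + 2, n) :: (m + 1, - n) :: nil)%Z. split.
  - repeat constructor; unfold supp, translate, Ftel; simpl.
    + replace (m + 2 - m)%Z with 2%Z by lia. simpl. lra.
    + replace (m + 1 - m)%Z with 1%Z by lia. simpl. lra.
  - simpl. lia.
Qed.

Lemma mean_term_S n : INR (S n) * ftel (S n) = / (INR n + 2).
Proof. rewrite ftel_S, S_INR. pose proof (pos_INR n). field. lra. Qed.

Lemma ln_succ_le x : 0 < x -> ln (x + 1) - ln x <= / x.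
Proof.
  intros Hx. rewrite <- ln_div by lra.
  replace ((x + 1) / x) with (1 + / x) by (field; lra).
  rewrite <- (ln_exp (/ x)) at 2. apply ln_le.
  - pose proof (Rinv_0_lt_compat x Hx). lra.
  - apply exp_ineq1_le.
Qed.

Lemma sum_mean_ge_ln n :
  ln (INR n + 2) - ln 2 <= sum_f_R0 (fun k => INR k * ftel k) n.
Proof.
  induction n as [|n IHn]; [simpl; rewrite ftel_0; replace (0 + 2) with 2; lra|].
  rewrite tech5, mean_term_S, S_INR. pose proof (pos_INR n).
  pose proof (ln_succ_le (INR n + 2) ltac:(lra)).
  replace (INR n + 1 + 2) with (INR n + 2 + 1) by ring. lra.
Qed.

Lemma sum_mean_unbounded K : exists N, forall n, (N <= n)%nat ->
  K <= sum_f_R0 (fun k => INR k * ftel k) n.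
Proof.
  destruct (INR_unbounded (exp (K + ln 2))) as [N HN]. exists N. intros n Hn.
  eapply Rle_trans; [|apply sum_mean_ge_ln].
  assert (INR N <= INR n) by (apply le_INR; lia).
  assert (ln (exp (K + ln 2)) <= ln (INR n + 2)) by (apply ln_le; [apply exp_pos|lra]).
  rewrite ln_exp in *. lra.
Qed.

Lemma mean_Ftel_infinite :
  is_lim_seq (sum_n (fun k : nat => INR k * Ftel (Z.of_nat k))) p_infty.
Proof.
  apply is_lim_seq_spec. intro K. destruct (sum_mean_unbounded (K + 1)) as [N HN].
  exists N. intros n Hn. rewrite sum_n_Reals. specialize (HN n Hn). unfold ftel in HN. lra.
Qed.

Lemma dominated_by_ftel_tail_le (g : nat -> R) l c M :
  (forall n, Rabs (g n) <= c * ftel n) -> is_series g l ->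
  Rabs (l - sum_f_R0 g M) <= c / (INR M + 1).
Proof.
  intros Hg Hl.
  assert (Hc : is_series (fun n => c * ftel n) (c * 1))
    by exact (is_series_scal c _ _ is_series_ftel).
  apply is_series_Reals in Hl, Hc.
  pose proof (sum_maj1 (fun n _ => g n) (fun n => c * ftel n) 0 l (c * 1) M Hl Hc Hg) as H.
  unfold SP in H.
  replace (sum_f_R0 (fun n => c * ftel n) M) with (c * sum_f_R0 ftel M) in H
    by (rewrite scal_sum; apply sum_eq; intros; ring).
  rewrite sum_ftel in H.
  replace (c / (INR M + 1)) with (c * 1 - c * (1 - / (INR M + 1)))
    by (pose proof (pos_INR M); field; lra).
  exact H.
Qed.

Lemma Rabs_cos_le_1 x : Rabs (cos x) <= 1.
Proof. apply Rabs_le, COS_bound. Qed.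

Lemma Rabs_sin_le_1 x : Rabs (sin x) <= 1.
Proof. apply Rabs_le, SIN_bound. Qed.

Lemma Rabs_ftel_mul_le (t : nat -> R) c :
  (forall n, Rabs (t n) <= c) -> forall n, Rabs (ftel n * t n) <= c * ftel n.
Proof.
  intros Ht n. rewrite Rabs_mult, Rabs_pos_eq by apply ftel_nonneg.
  pose proof (ftel_nonneg n). specialize (Ht n). nra.
Qed.

Lemma ex_series_ftel_mul (t : nat -> R) c :
  (forall n, Rabs (t n) <= c) -> ex_series (fun n => ftel n * t n).
Proof.
  intros Ht. apply (@ex_series_le R_AbsRing R_CompleteNormedModule _ (fun n => c * ftel n)).
  - exact (Rabs_ftel_mul_le t c Ht).
  - exists (c * 1). exact (is_series_scal c _ _ is_series_ftel).
Qed.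

Definition Cser (xi : R) : R := Series (fun n => ftel n * cos (INR n * xi)).
Definition Sser (xi : R) : R := Series (fun n => ftel n * sin (INR n * xi)).
Definition Rser (xi : R) : R := 1 - Cser xi.

Lemma one_minus_Fhat_Ftel xi : (1 - Fhat Ftel xi)%C = (Rser xi, Sser xi).
Proof. apply injective_projections; simpl; unfold Rser, Cser, Sser, ftel; ring. Qed.

Lemma is_series_Cser xi : is_series (fun n => ftel n * cos (INR n * xi)) (Cser xi).
Proof. apply Series_correct, (ex_series_ftel_mul _ 1). intro n. apply Rabs_cos_le_1. Qed.

Lemma is_series_Sser xi : is_series (fun n => ftel n * sin (INR n * xi)) (Sser xi).
Proof. apply Series_correct, (ex_series_ftel_mul _ 1). intro n. apply Rabs_sin_le_1. Qed.

Lemma is_series_Rser xi : is_series (fun n => ftel n * (1 - cos (INR n * xi))) (Rser xi).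
Proof.
  eapply is_series_ext; [|exact (is_series_minus _ _ _ _ is_series_ftel (is_series_Cser xi))].
  intro n. unfold plus, opp. simpl. ring.
Qed.

Lemma Rser_opp xi : Rser (- xi) = Rser xi.
Proof.
  unfold Rser, Cser. f_equal. apply Series_ext. intro n.
  now rewrite Ropp_mult_distr_r_reverse, cos_neg.
Qed.

Lemma Sser_opp xi : Sser (- xi) = - Sser xi.
Proof.
  unfold Sser. rewrite <- Series_opp. apply Series_ext. intro n.
  rewrite Ropp_mult_distr_r_reverse, sin_neg. ring.
Qed.

Lemma one_minus_cos_le a : 0 <= a <= 2 -> 1 - cos a <= a ^ 2 / 2.
Proof.
  intros Ha. destruct (pre_cos_bound a 0) as [H _]; try lra.
  unfold cos_approx, cos_term in H. simpl in H. lra.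
Qed.

Lemma sin_ge_linear a : 0 <= a <= 1 -> 5 / 6 * a <= sin a.
Proof.
  intros Ha. destruct (pre_sin_bound a 0) as [H _]; try lra.
  unfold sin_approx, sin_term in H. simpl in H. nra.
Qed.

Lemma nat_floor_inv x : 0 < x -> exists M : nat, INR M * x <= 1 < (INR M + 1) * x.
Proof.
  intros Hx. destruct (archimed (/ x)) as [Hup Hup'].
  assert (Hinv : 0 < / x) by now apply Rinv_0_lt_compat.
  assert (Hz : (0 <= up (/ x) - 1)%Z) by (enough (0 < up (/ x))%Z by lia; apply lt_IZR; lra).
  exists (Z.to_nat (up (/ x) - 1)).
  rewrite INR_IZR_INZ, Z2Nat.id, minus_IZR by exact Hz. simpl.
  assert (Hxx : / x * x = 1) by (field; lra). split; nra.
Qed.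

Lemma Rser_pos xi : 0 < xi < PI -> 0 < Rser xi.
Proof.
  intros Hxi.
  assert (Hsin : 0 < sin (xi / 2)) by (apply sin_gt_0; lra).
  assert (Hcos : cos xi = 1 - 2 * sin (xi / 2) * sin (xi / 2)).
  { rewrite <- cos_2a_sin. f_equal. field. }
  apply Rlt_le_trans with (sum_f_R0 (fun n => ftel n * (1 - cos (INR n * xi))) 1).
  - simpl. rewrite ftel_0, ftel_S. simpl. replace (1 * xi) with xi by ring. rewrite Hcos. nra.
  - apply sum_incr; [apply is_series_Reals, is_series_Rser|].
    intro n. pose proof (ftel_nonneg n). pose proof (COS_bound (INR n * xi)). nra.
Qed.

(* Split at [M ~ 1/xi]: the head is bounded by [1 - cos a <= a^2/2], the tail by
   [sum_(n > M) ftel n = 1/(M+1)]. *)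
Lemma Rser_le xi : 0 < xi < 1 -> Rser xi <= 3 * xi.
Proof.
  intros Hxi. destruct (nat_floor_inv xi) as [M [HM1 HM2]]; [lra|].
  pose proof (pos_INR M) as HM0.
  set (g n := ftel n * (1 - cos (INR n * xi))).
  assert (Hhead : sum_f_R0 g M <= xi ^ 2 / 2 * INR (S M)).
  { rewrite <- sum_cte. apply sum_Rle. intros n Hn.
    assert (Hnx : 0 <= INR n * xi <= 1).
    { assert (INR n <= INR M) by (apply le_INR; lia). pose proof (pos_INR n). nra. }
    pose proof (one_minus_cos_le (INR n * xi) ltac:(lra)) as Hc. unfold g.
    destruct n as [|n]; [rewrite ftel_0; nra|].
    rewrite ftel_S in *. rewrite S_INR in *. pose proof (pos_INR n).
    apply Rle_trans with (/ ((INR n + 1) * (INR n + 1 + 1)) * ((INR n + 1) * xi) ^ 2 / 2).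
    - assert (0 <= / ((INR n + 1) * (INR n + 1 + 1))) by (apply Rlt_le, Rinv_0_lt_compat; nra).
      nra.
    - replace (/ ((INR n + 1) * (INR n + 1 + 1)) * ((INR n + 1) * xi) ^ 2 / 2)
        with ((INR n + 1) / (INR n + 2) * (xi ^ 2 / 2)) by (field; lra).
      assert ((INR n + 1) / (INR n + 2) <= 1) by (apply (Rdiv_le_1 (INR n + 1)); lra).
      assert (0 <= xi ^ 2 / 2) by nra. nra. }
  assert (Htail : Rabs (Rser xi - sum_f_R0 g M) <= 2 / (INR M + 1)).
  { apply dominated_by_ftel_tail_le; [|apply is_series_Rser]. apply Rabs_ftel_mul_le. intro n.
    pose proof (COS_bound (INR n * xi)). apply Rabs_le. lra. }
  apply Rabs_le_between' in Htail. rewrite S_INR in Hhead.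
  assert (2 / (INR M + 1) <= 2 * xi) by (apply Rle_div_l; nra).
  nra.
Qed.

(* On the head [n <= M ~ 1/xi], [sin (n xi) >= 5/6 n xi] recovers the divergent mean of [Ftel]. *)
Lemma Sser_ge_mean xi : 0 < xi < 1 -> exists M : nat,
  xi * (5 / 6 * sum_f_R0 (fun k => INR k * ftel k) M - 1) <= Sser xi /\ / xi - 1 < INR M.
Proof.
  intros Hxi. destruct (nat_floor_inv xi) as [M [HM1 HM2]]; [lra|]. exists M.
  pose proof (pos_INR M) as HM0.
  set (g n := ftel n * sin (INR n * xi)).
  assert (Hhead : 5 / 6 * xi * sum_f_R0 (fun k => INR k * ftel k) M <= sum_f_R0 g M).
  { rewrite scal_sum. apply sum_Rle. intros n Hn.
    assert (Hnx : 0 <= INR n * xi <= 1).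
    { assert (INR n <= INR M) by (apply le_INR; lia). pose proof (pos_INR n). nra. }
    pose proof (sin_ge_linear _ Hnx). pose proof (ftel_nonneg n). unfold g. nra. }
  assert (Htail : Rabs (Sser xi - sum_f_R0 g M) <= 1 / (INR M + 1)).
  { apply dominated_by_ftel_tail_le; [|apply is_series_Sser].
    apply Rabs_ftel_mul_le. intro n. apply Rabs_sin_le_1. }
  apply Rabs_le_between' in Htail.
  assert (1 / (INR M + 1) <= xi) by (apply Rle_div_l; nra).
  split; [nra|].
  assert (/ xi < INR M + 1); [|lra].
  apply (Rmult_lt_reg_r xi); [lra|]. rewrite Rinv_l; lra.
Qed.

Lemma Sser_dominates_Rser K : exists d, 0 < d /\ forall xi, 0 < xi < d ->
  0 < Rser xi /\ Rser xi <= 1 / 4 /\ K * Rser xi <= Sser xi.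
Proof.
  set (K' := Rmax K 0).
  assert (HK' : K <= K' /\ 0 <= K') by (split; [apply Rmax_l|apply Rmax_r]).
  destruct (sum_mean_unbounded (6 / 5 * (3 * K' + 1))) as [N HN].
  pose proof (pos_INR N).
  exists (Rmin (1 / 12) (/ (INR N + 1))).
  split; [apply Rmin_pos; [lra|apply Rinv_0_lt_compat; lra]|].
  intros xi [Hx0 Hx1].
  assert (Hxa : xi < 1 / 12) by (eapply Rlt_le_trans; [exact Hx1|apply Rmin_l]).
  assert (Hxb : xi < / (INR N + 1)) by (eapply Rlt_le_trans; [exact Hx1|apply Rmin_r]).
  destruct (Sser_ge_mean xi) as [M [HS HM]]; [lra|].
  assert (HNM : (N <= M)%nat).
  { apply INR_le. assert (INR N + 1 < / xi); [|lra].
    rewrite <- (Rinv_inv (INR N + 1)). apply Rinv_lt_contravar; [|lra].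
    apply Rmult_lt_0_compat; [|apply Rinv_0_lt_compat]; lra. }
  specialize (HN M HNM).
  pose proof (Rser_pos xi ltac:(pose proof PI2_1; lra)).
  pose proof (Rser_le xi ltac:(lra)).
  split; [|split]; [lra|lra|nra].
Qed.

Lemma atan_nonneg t : 0 <= t -> 0 <= atan t.
Proof.
  intros Ht. rewrite <- atan_0. destruct (Req_dec t 0) as [->|Hne]; [lra|].
  left. apply atan_increasing. lra.
Qed.

Lemma Rabs_Arg_Re_pos r s : 0 < r -> Rabs (Arg (r, s)) = atan (Rabs s / r).
Proof.
  intros Hr. unfold Arg. simpl. destruct (Rlt_dec 0 r) as [_|]; [|lra].
  destruct (Rle_lt_dec 0 s) as [Hs|Hs].
  - rewrite Rabs_pos_eq with (x := s) by exact Hs.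
    apply Rabs_pos_eq, atan_nonneg, Rdiv_le_0_compat; lra.
  - rewrite Rabs_left with (r := s) by exact Hs.
    replace (s / r) with (- (- s / r)) by (field; lra).
    rewrite atan_opp, Rabs_Ropp.
    apply Rabs_pos_eq, atan_nonneg, Rdiv_le_0_compat; lra.
Qed.

Lemma Sser_dominates_Rser_abs K : exists d, 0 < d /\ forall xi, 0 < Rabs xi < d ->
  0 < Rser xi /\ K * Rser xi <= Rabs (Sser xi).
Proof.
  destruct (Sser_dominates_Rser K) as [d [Hd Hdom]]. exists d. split; [exact Hd|].
  intros xi Hxi. destruct (Hdom (Rabs xi) Hxi) as [HR [_ HK]].
  destruct (Rle_lt_dec 0 xi) as [Hx|Hx].
  - rewrite Rabs_pos_eq in HR, HK by exact Hx. split; [exact HR|].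
    eapply Rle_trans; [exact HK|apply Rle_abs].
  - rewrite Rabs_left in HR, HK by exact Hx. rewrite Rser_opp in HR, HK. rewrite Sser_opp in HK.
    split; [exact HR|].
    eapply Rle_trans; [exact HK|]. rewrite <- Rabs_Ropp. apply Rle_abs.
Qed.

Lemma lim_abs_Arg_one_minus_Fhat_Ftel :
  is_lim (fun xi => Rabs (Arg ((1 - Fhat Ftel xi)%C))) 0 (PI / 2).
Proof.
  apply is_lim_spec. intro eps. simpl. pose proof (cond_pos eps) as Heps.
  pose proof PI4_RGT_0. pose proof PI4_RLT_PI2.
  set (e := Rmin (eps / 2) (PI / 4)).
  assert (He : 0 < e <= eps / 2 /\ e <= PI / 4).
  { split; [split|]; [apply Rmin_pos; lra|apply Rmin_l|apply Rmin_r]. }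
  set (K := tan (PI / 2 - e)).
  assert (HK : atan K = PI / 2 - e) by (apply atan_tan; lra).
  destruct (Sser_dominates_Rser_abs K) as [d [Hd Hdom]].
  exists (mkposreal d Hd). intros xi Hxi Hxi0.
  change (Rabs (xi - 0) < d) in Hxi. rewrite Rminus_0_r in Hxi.
  destruct (Hdom xi) as [HR HS]; [split; [apply Rabs_pos_lt|]; assumption|].
  rewrite one_minus_Fhat_Ftel, Rabs_Arg_Re_pos by exact HR.
  assert (Hratio : K <= Rabs (Sser xi) / Rser xi)
    by (apply (Rle_div_r K); [exact HR|exact HS]).
  assert (Hatan : atan K <= atan (Rabs (Sser xi) / Rser xi)).
  { destruct (Req_dec K (Rabs (Sser xi) / Rser xi)) as [->|Hne]; [lra|].
    left. apply atan_increasing. lra. }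
  pose proof (atan_bound (Rabs (Sser xi) / Rser xi)).
  rewrite Rabs_left1; lra.
Qed.

Lemma Cpow_unit xi k : Cpow (cos xi, - sin xi) k = (cos (INR k * xi), - sin (INR k * xi)).
Proof.
  induction k as [|k IHk].
  - simpl. rewrite Rmult_0_l, cos_0, sin_0. apply injective_projections; simpl; ring.
  - simpl Cpow. rewrite IHk, S_INR, Rmult_plus_distr_r, Rmult_1_l, cos_plus, sin_plus.
    apply injective_projections; simpl; ring.
Qed.

Lemma Cmod_unit xi : Cmod (cos xi, - sin xi) = 1.
Proof.
  unfold Cmod. simpl. replace (cos xi * (cos xi * 1) + - sin xi * (- sin xi * 1))
    with (sin xi ^ 2 + cos xi ^ 2) by ring.
  rewrite <- !Rsqr_pow2, sin2_cos2. apply sqrt_1.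
Qed.

Lemma phiF_unit F xi : phiF F (cos xi, - sin xi) = Fhat F xi.
Proof.
  unfold phiF, Fhat. apply injective_projections; simpl.
  - apply Series_ext. intro n. now rewrite Cpow_unit.
  - rewrite <- Series_opp. apply Series_ext. intro n. rewrite Cpow_unit. simpl. ring.
Qed.

Lemma no_sector_Ftel : ~ (exists theta : R, 0 < theta < PI / 2 /\
  forall w : C, Cmod w <= 1 ->
    (Cmod (phiF Ftel w) < 1 \/ phiF Ftel w = 1%C) /\ Lambda_bar theta ((1 - phiF Ftel w)%C)).
Proof.
  intros [theta [Htheta Hsector]].
  pose proof lim_abs_Arg_one_minus_Fhat_Ftel as Hlim. apply is_lim_spec in Hlim.
  destruct (Hlim (mkposreal (PI / 2 - theta) ltac:(lra))) as [d Hd]. simpl in Hd.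
  pose proof (cond_pos d) as Hd0. set (xi := d / 2).
  assert (Hxi : Rabs (Rabs (Arg (1 - Fhat Ftel xi)) - PI / 2) < PI / 2 - theta).
  { apply Hd; unfold xi; [|lra]. change (Rabs (d / 2 - 0) < d).
    rewrite Rminus_0_r, Rabs_pos_eq; lra. }
  destruct (Hsector (cos xi, - sin xi)) as [_ Hxi']; [rewrite Cmod_unit; lra|].
  rewrite phiF_unit in Hxi'. apply Rabs_def2 in Hxi.
  destruct Hxi' as [Hzero|Hle]; [|lra].
  rewrite Hzero in Hxi. unfold Arg in Hxi. simpl in Hxi.
  repeat destruct Rlt_dec; try lra. rewrite Rabs_R0 in Hxi. lra.
Qed.

Definition conv (a b : nat -> R) (k : nat) : R :=
  sum_f_R0 (fun j => a j * b (k - j)%nat) k.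

(* [z = sum_k g k e^{-i k xi}], split into real and imaginary parts. *)
Definition has_fourier (g : nat -> R) (xi : R) (z : C) : Prop :=
  is_series (fun k => g k * cos (INR k * xi)) (Re z) /\
  is_series (fun k => g k * sin (INR k * xi)) (- Im z).

Lemma ex_series_Rabs_mul_le_1 (a t : nat -> R) :
  ex_series (fun k => Rabs (a k)) -> (forall k, Rabs (t k) <= 1) ->
  ex_series (fun k => Rabs (a k * t k)).
Proof.
  intros Ha Ht. apply (@ex_series_le R_AbsRing R_CompleteNormedModule _ (fun k => Rabs (a k)));
    [|exact Ha].
  intro k. change (Rabs (Rabs (a k * t k)) <= Rabs (a k)).
  rewrite Rabs_Rabsolu, Rabs_mult. pose proof (Rabs_pos (a k)). specialize (Ht k). nra.
Qed.

Lemma conv_cos_sub (a b : nat -> R) xi k :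
  conv (fun j => a j * cos (INR j * xi)) (fun j => b j * cos (INR j * xi)) k
  - conv (fun j => a j * sin (INR j * xi)) (fun j => b j * sin (INR j * xi)) k
  = conv a b k * cos (INR k * xi).
Proof.
  unfold conv. rewrite <- minus_sum, Rmult_comm, scal_sum. apply sum_eq. intros j Hj.
  replace (INR k * xi) with (INR j * xi + INR (k - j) * xi) by (rewrite minus_INR by lia; ring).
  rewrite cos_plus. ring.
Qed.

Lemma conv_sin_add (a b : nat -> R) xi k :
  conv (fun j => a j * sin (INR j * xi)) (fun j => b j * cos (INR j * xi)) k
  + conv (fun j => a j * cos (INR j * xi)) (fun j => b j * sin (INR j * xi)) k
  = conv a b k * sin (INR k * xi).
Proof.
  unfold conv. rewrite <- sum_plus, Rmult_comm, scal_sum. apply sum_eq. intros j Hj.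
  replace (INR k * xi) with (INR j * xi + INR (k - j) * xi) by (rewrite minus_INR by lia; ring).
  rewrite sin_plus. ring.
Qed.

Lemma has_fourier_conv (a b : nat -> R) xi z w :
  ex_series (fun k => Rabs (a k)) -> ex_series (fun k => Rabs (b k)) ->
  has_fourier a xi z -> has_fourier b xi w -> has_fourier (conv a b) xi (z * w).
Proof.
  intros Ha Hb [Hac Has] [Hbc Hbs].
  assert (Hcos : forall k, Rabs (cos (INR k * xi)) <= 1) by (intro; apply Rabs_cos_le_1).
  assert (Hsin : forall k, Rabs (sin (INR k * xi)) <= 1) by (intro; apply Rabs_sin_le_1).
  pose proof (ex_series_Rabs_mul_le_1 _ _ Ha Hcos) as Hac'.
  pose proof (ex_series_Rabs_mul_le_1 _ _ Ha Hsin) as Has'.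
  pose proof (ex_series_Rabs_mul_le_1 _ _ Hb Hcos) as Hbc'.
  pose proof (ex_series_Rabs_mul_le_1 _ _ Hb Hsin) as Hbs'.
  split.
  - pose proof (is_series_minus _ _ _ _ (is_series_mult _ _ _ _ Hac Hbc Hac' Hbc')
                                      (is_series_mult _ _ _ _ Has Hbs Has' Hbs')) as H.
    replace (Re (z * w)) with (plus (Re z * Re w) (opp (- Im z * - Im w)))
      by (destruct z, w; unfold plus, opp, Re, Im; simpl; ring).
    refine (is_series_ext _ _ _ _ H). intro k. rewrite <- conv_cos_sub. reflexivity.
  - pose proof (is_series_plus _ _ _ _ (is_series_mult _ _ _ _ Has Hbc Has' Hbc')
                                     (is_series_mult _ _ _ _ Hac Hbs Hac' Hbs')) as H.
    replace (- Im (z * w)) with (plus (- Im z * Re w) (Re z * - Im w))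
      by (destruct z, w; unfold plus, Re, Im; simpl; ring).
    refine (is_series_ext _ _ _ _ H). intro k. rewrite <- conv_sin_add. reflexivity.
Qed.

Lemma has_fourier_ext (g h : nat -> R) xi z :
  (forall k, g k = h k) -> has_fourier g xi z -> has_fourier h xi z.
Proof.
  intros Hgh [Hc Hs].
  split; [eapply is_series_ext; [|exact Hc]|eapply is_series_ext; [|exact Hs]];
    intro k; simpl; now rewrite Hgh.
Qed.

Lemma is_series_delta0_mul (g : nat -> R) :
  is_series (fun k => (if Nat.eqb k 0 then 1 else 0) * g k) (g 0%nat).
Proof.
  apply is_series_Reals. intros eps Heps. exists 0%nat. intros N _. unfold Rdist.
  replace (sum_f_R0 _ N) with (g 0%nat); [rewrite Rminus_diag, Rabs_R0; exact Heps|].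
  induction N as [|N IHN]; simpl; [ring|]. rewrite <- IHN. ring.
Qed.

Section ConvolutionPowers.

Variable F : Z -> R.
Hypothesis HF : in_PZplus F.

Lemma convpow_0_of_nat k : convpow F 0 (Z.of_nat k) = if Nat.eqb k 0 then 1 else 0.
Proof. now destruct k. Qed.

Lemma convpow_S_of_nat n k : convpow F (S n) (Z.of_nat k) =
  conv (fun j => F (Z.of_nat j)) (fun j => convpow F n (Z.of_nat j)) k.
Proof.
  assert (Hz : forall z, (0 <= z)%Z -> convpow F (S n) z =
     sum_f_R0 (fun j => F (Z.of_nat j) * convpow F n (z - Z.of_nat j)%Z) (Z.to_nat z)).
  { intros z Hz. destruct z; [reflexivity|reflexivity|lia]. }
  rewrite Hz, Nat2Z.id by lia. apply sum_eq. intros j Hj. now rewrite Nat2Z.inj_sub.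
Qed.

Lemma convpow_nonneg n k : 0 <= convpow F n (Z.of_nat k).
Proof.
  destruct HF as [HF01 _]. revert k. induction n as [|n IHn]; intro k.
  - rewrite convpow_0_of_nat. destruct (Nat.eqb k 0); lra.
  - rewrite convpow_S_of_nat. apply cond_pos_sum. intro j.
    pose proof (HF01 (Z.of_nat j)). pose proof (IHn (k - j)%nat). nra.
Qed.

Lemma is_series_convpow n : is_series (fun k => convpow F n (Z.of_nat k)) 1.
Proof.
  destruct HF as [HF01 [_ Hmass]]. induction n as [|n IHn].
  - eapply is_series_ext; [|exact (is_series_delta0_mul (fun _ => 1))].
    intro k. rewrite convpow_0_of_nat. apply Rmult_1_r.
  - eapply is_series_ext; [intro k; symmetry; apply convpow_S_of_nat|].
    rewrite <- (Rmult_1_l 1). apply is_series_mult_pos; [exact Hmass|exact IHn| |].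
    + intro k. apply HF01.
    + intro k. apply convpow_nonneg.
Qed.

Lemma ex_series_Rabs_convpow n : ex_series (fun k => Rabs (convpow F n (Z.of_nat k))).
Proof.
  exists 1. eapply is_series_ext; [|apply is_series_convpow].
  intro k. symmetry. apply Rabs_pos_eq, convpow_nonneg.
Qed.

Lemma ex_series_Rabs_mass : ex_series (fun k => Rabs (F (Z.of_nat k))).
Proof.
  destruct HF as [HF01 [_ Hmass]]. exists 1. eapply is_series_ext; [|exact Hmass].
  intro k. symmetry. apply Rabs_pos_eq, HF01.
Qed.

Lemma has_fourier_Fhat xi : has_fourier (fun k => F (Z.of_nat k)) xi (Fhat F xi).
Proof.
  split; simpl; [|rewrite Ropp_involutive]; apply Series_correct, ex_series_Rabs;
    apply ex_series_Rabs_mul_le_1; try exact ex_series_Rabs_mass; intro k;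
    [apply Rabs_cos_le_1|apply Rabs_sin_le_1].
Qed.

Lemma has_fourier_convpow xi n :
  has_fourier (fun k => convpow F n (Z.of_nat k)) xi (Fhat F xi ^ n).
Proof.
  induction n as [|n IHn].
  - apply (has_fourier_ext (fun k => if Nat.eqb k 0 then 1 else 0));
      [intro k; symmetry; apply convpow_0_of_nat|].
    split; simpl.
    + pose proof (is_series_delta0_mul (fun k => cos (INR k * xi))) as H.
      simpl in H. now rewrite Rmult_0_l, cos_0 in H.
    + pose proof (is_series_delta0_mul (fun k => sin (INR k * xi))) as H.
      simpl in H. now rewrite Rmult_0_l, sin_0 in H; rewrite Ropp_0.
  - apply (has_fourier_ext (conv (fun j => F (Z.of_nat j)) (fun j => convpow F n (Z.of_nat j)))).
    + intro k. symmetry. apply convpow_S_of_nat.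
    + apply has_fourier_conv; [exact ex_series_Rabs_mass|apply ex_series_Rabs_convpow|
                               apply has_fourier_Fhat|exact IHn].
Qed.

End ConvolutionPowers.

Lemma is_series_Rabs_le (g : nat -> R) l B :
  is_series g l -> (forall N, Rabs (sum_f_R0 g N) <= B) -> Rabs l <= B.
Proof.
  intros Hg HB. change (is_lim_seq (sum_n g) l) in Hg.
  apply (is_lim_seq_le (fun N => Rabs (sum_n g N)) (fun _ => B) (Rbar_abs l) B);
    [|exact (is_lim_seq_abs _ _ Hg)|apply is_lim_seq_const].
  intro N. rewrite sum_n_Reals. apply HB.
Qed.

Lemma scaled_series_diff_le (u v t : nat -> R) lu lv c B : 0 <= c ->
  (forall k, Rabs (t k) <= 1) ->
  (forall N, c * sum_f_R0 (fun k => Rabs (u k - v k)) N <= B) ->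
  is_series (fun k => u k * t k) lu -> is_series (fun k => v k * t k) lv ->
  c * Rabs (lu - lv) <= B.
Proof.
  intros Hc Ht HB Hu Hv.
  assert (Hs : is_series (fun k => c * ((u k - v k) * t k)) (c * (lu - lv))).
  { eapply is_series_ext; [|exact (is_series_scal c _ _ (is_series_minus _ _ _ _ Hu Hv))].
    intro k. unfold scal, plus, opp. simpl. unfold mult. simpl. ring. }
  rewrite <- (Rabs_pos_eq c) at 1 by exact Hc. rewrite <- Rabs_mult.
  apply (is_series_Rabs_le _ _ _ Hs). intro N.
  replace (sum_f_R0 (fun k => c * ((u k - v k) * t k)) N)
    with (c * sum_f_R0 (fun k => (u k - v k) * t k) N)
    by (rewrite scal_sum; apply sum_eq; intros; ring).
  rewrite Rabs_mult, Rabs_pos_eq by exact Hc.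
  eapply Rle_trans; [|apply (HB N)]. apply Rmult_le_compat_l; [exact Hc|].
  eapply Rle_trans; [apply sum_f_R0_triangle|]. apply sum_Rle. intros k _.
  rewrite Rabs_mult. pose proof (Rabs_pos (u k - v k)). specialize (Ht k). nra.
Qed.

Lemma Cmod_le_2_Rmax (z : C) : Cmod z <= 2 * Rmax (Rabs (fst z)) (Rabs (snd z)).
Proof.
  assert (Hsqrt : sqrt 2 <= 2)
    by (rewrite <- (sqrt_square 2) at 2 by lra; apply sqrt_le_1_alt; lra).
  assert (Hmax : 0 <= Rmax (Rabs (fst z)) (Rabs (snd z))).
  { eapply Rle_trans; [apply Rabs_pos|apply Rmax_l]. }
  eapply Rle_trans; [apply Cmod_2Rmax|]. nra.
Qed.

(* [z^n (1 - z)] is the Fourier transform of [F^(n) - F^(n+1)], whose l^1 norm [A] controls. *)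
Lemma in_A_Fhat_pow_bound F : in_A F -> exists M, forall xi n,
  INR n * Cmod (Fhat F xi ^ n * (1 - Fhat F xi)) <= 2 * M.
Proof.
  intros [HF [M HM]]. exists M. intros xi n. set (z := Fhat F xi).
  destruct (has_fourier_convpow F HF xi n) as [Hc1 Hs1].
  destruct (has_fourier_convpow F HF xi (S n)) as [Hc2 Hs2].
  pose proof (scaled_series_diff_le _ _ _ _ _ _ M (pos_INR n)
                (fun k => Rabs_cos_le_1 _) (HM n) Hc1 Hc2) as Hre.
  pose proof (scaled_series_diff_le _ _ _ _ _ _ M (pos_INR n)
                (fun k => Rabs_sin_le_1 _) (HM n) Hs1 Hs2) as Him.
  replace (z ^ n * (1 - z))%C with (z ^ n - z ^ S n)%C by (simpl; ring).
  assert (Hfst : fst (z ^ n - z ^ S n)%C = Re (z ^ n) - Re (z ^ S n)) by reflexivity.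
  assert (Hsnd : snd (z ^ n - z ^ S n)%C = - (- Im (z ^ n) - - Im (z ^ S n)))
    by (unfold Im; simpl; ring).
  assert (Hmax : INR n * Rmax (Rabs (fst (z ^ n - z ^ S n)%C))
                              (Rabs (snd (z ^ n - z ^ S n)%C)) <= M).
  { rewrite Hfst, Hsnd, Rabs_Ropp. apply Rmax_case; assumption. }
  pose proof (Cmod_le_2_Rmax (z ^ n - z ^ S n)). pose proof (pos_INR n). nra.
Qed.

Lemma one_minus_pow_ge x n : 0 <= x <= 1 -> 1 - INR n * x <= (1 - x) ^ n.
Proof.
  intros Hx. induction n as [|n IHn]; [simpl; lra|].
  rewrite S_INR. simpl. pose proof (pos_INR n). nra.
Qed.

(* With [n ~ 1/(2 R(xi))] one has [|z|^n >= 1/2] and [n |1 - z| >= n S(xi) >= K/8]. *)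
Lemma not_in_A_Ftel : ~ in_A Ftel.
Proof.
  intros HA. destruct (in_A_Fhat_pow_bound Ftel HA) as [M HM].
  set (K := 16 * (Rabs M + 1)).
  destruct (Sser_dominates_Rser K) as [d [Hd Hdom]].
  set (xi := d / 2). destruct (Hdom xi) as [HR0 [HR1 HKR]]; [unfold xi; lra|].
  destruct (nat_floor_inv (2 * Rser xi)) as [n [Hn1 Hn2]]; [lra|].
  set (z := Fhat Ftel xi).
  assert (Hsplit : (1 - z)%C = (Rser xi, Sser xi)) by apply one_minus_Fhat_Ftel.
  assert (Hz : 1 - Rser xi <= Cmod z).
  { eapply Rle_trans; [|apply re_le_Cmod].
    replace (Re z) with (1 - Rser xi) by (unfold Rser, Cser, ftel; simpl; ring).
    apply Rle_abs. }
  assert (H1z : Sser xi <= Cmod (1 - z)).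
  { eapply Rle_trans; [|apply Rmax_Cmod]. rewrite Hsplit. simpl.
    eapply Rle_trans; [apply Rle_abs|apply Rmax_r]. }
  assert (Hpow : 1 / 2 <= Cmod z ^ n).
  { apply Rle_trans with ((1 - Rser xi) ^ n); [|apply pow_incr; split; [lra|exact Hz]].
    pose proof (one_minus_pow_ge (Rser xi) n ltac:(lra)). nra. }
  specialize (HM xi n). fold z in HM. rewrite Cmod_mult, Cmod_pow in HM.
  assert (HS : 0 <= Sser xi) by (pose proof (Rabs_pos M); unfold K in HKR; nra).
  assert (HnR : 1 / 4 <= INR n * Rser xi) by nra.
  assert (Hlow : K / 8 <= INR n * (Cmod z ^ n * Cmod (1 - z))).
  { assert (HK : 0 < K) by (unfold K; pose proof (Rabs_pos M); lra).
    assert (INR n * (K * Rser xi) <= INR n * Sser xi)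
      by (apply Rmult_le_compat_l; [apply pos_INR|exact HKR]).
    assert (K * (1 / 4) <= K * (INR n * Rser xi)) by (apply Rmult_le_compat_l; lra).
    apply Rle_trans with (INR n * (1 / 2 * Sser xi)); [lra|].
    apply Rmult_le_compat_l; [apply pos_INR|].
    apply Rmult_le_compat; lra. }
  unfold K in Hlow. pose proof (Rle_abs M). lra.
Qed.

Theorem theorem6p2 :
  exists F : Z -> R,
    in_PZplus F /\ aperiodic F /\
    is_lim_seq (sum_n (fun k : nat => INR k * F (Z.of_nat k))) p_infty /\
    is_lim (fun xi => Rabs (Arg ((1 - Fhat F xi)%C))) 0 (PI / 2) /\
    ~ (exists theta : R, 0 < theta < PI / 2 /\
         forall w : C, Cmod w <= 1 ->
           (Cmod (phiF F w) < 1 \/ phiF F w = 1%C) /\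
           Lambda_bar theta ((1 - phiF F w)%C)) /\
    ~ in_A F.
Proof.
  exists Ftel.
  split; [exact in_PZplus_Ftel|].
  split; [exact aperiodic_Ftel|].
  split; [exact mean_Ftel_infinite|].
  split; [exact lim_abs_Arg_one_minus_Fhat_Ftel|].
  split; [exact no_sector_Ftel|exact not_in_A_Ftel].
Qed.
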